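(* Let $\Sigma$ be a set of real $n\times n$ matrices and let $\|\cdot\|$ be a polyhedral seminorm on $\mathbb{R}^n$ that is nonincreasing for $\Sigma$. Let $\mathcal{B}=\{x\in\mathbb{R}^n:\|x\|\le 1\}$. If there is a left-infinite product $\dots A_{\sigma(2)}A_{\sigma(1)}$ of matrices from $\Sigma$ that does not contract $\|\cdot\|$, then there is a left-infinite product of matrices from $\Sigma$ that does not contract $\|\cdot\|$ and that is periodic with a period $p$ satisfying $p\le p^*=W(\mathcal{B})$.
   Context: A seminorm is polyhedral if its unit ball is a polyhedron (a set defined by finitely many linear inequalities). A seminorm $\|\cdot\|$ is nonincreasing for a matrix $A$ if $\|Ax\|\le\|x\|$ for all $x$, and nonincreasing for a set $\Sigma$ if it is so for every matrix of $\Sigma$. Given a sequence $\sigma$ of indices, the left-infinite product $\dots A_{\sigma(2)}A_{\sigma(1)}$ contracts $\|\cdot\|$ if there is $t$ with $A_{\sigma(t)}\cdots A_{\sigma(1)}\mathcal{B}\subset \mathrm{int}(\mathcal{B})$ (interior in $\mathbb{R}^n$); it is periodic with period $p$ if $\sigma(i+p)=\sigma(i)$ for all $i$. Faces: for a polyhedron $\mathcal{Q}$, a face is $\mathcal{Q}$, $\varnothing$, or a set $\mathcal{Q}\cap\{x:b^\top x=c\}$ that is nonempty, where $b^\top x\le c$ for all $x\in\mathcal{Q}$; its dimension is $d$ if its affine hull has dimension $d$. A proper face is a face other than $\mathcal{Q}$ and $\varnothing$. For a centrally symmetric polyhedron $\mathcal{Q}=-\mathcal{Q}$, a double-face is a set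 $F\cup -F$ with $F$ a proper face (its rank is the dimension of $F$). The lattice of double-faces of $\mathcal{Q}$ is the set consisting of all double-faces of $\mathcal{Q}$ together with $\mathcal{Q}$ and $\varnothing$, partially ordered by inclusion. An antichain is a set of pairwise incomparable elements, and $W(\mathcal{Q})$, the width, is the maximum number of elements of an antichain in the lattice of double-faces of $\mathcal{Q}$. (The unit ball $\mathcal{B}$ of a seminorm is centrally symmetric.) *)

From HB Require Import structures.
From mathcomp Require Import all_boot all_order all_algebra.
From mathcomp Require Import all_classical all_reals all_analysis.
Set Implicit Arguments. Unset Strict Implicit. Unset Printing Implicit Defensive.
Import Order.TTheory GRing.Theory Num.Theory.
Import numFieldNormedType.Exports.
Local Open Scope classical_set_scope.
Local Open Scope ring_scope.

Section Defs.
Variables (R : realType) (n : nat).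
Notation vec := 'cV[R]_n.

Definition dot (b x : vec) : R := \sum_(j < n) b j 0 * x j 0.

Definition seminorm (N : vec -> R) : Prop :=
  (forall x y, N (x + y) <= N x + N y) /\
  (forall (a : R) x, N (a *: x) = `|a| * N x).

Definition unit_ball (N : vec -> R) : set vec := [set x | N x <= 1].

Definition polyhedron (Q : set vec) : Prop :=
  exists (m : nat) (b : 'I_m -> vec) (c : 'I_m -> R),
    Q = [set x | forall i, dot (b i) x <= c i].

Definition polyhedral (N : vec -> R) : Prop := polyhedron (unit_ball N).

Definition nonincreasing_for (N : vec -> R) (A : 'M[R]_n) : Prop :=
  forall x, N (A *m x) <= N x.

(* left-infinite products: sigma : nat -> I, with sigma 0 the paper's sigma(1);
   lprod Sigma sigma t = A_{sigma(t)} ... A_{sigma(1)} (paper indexing) *)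
Fixpoint lprod (I : Type) (Sigma : I -> 'M[R]_n) (sigma : nat -> I) (t : nat)
  : 'M[R]_n :=
  match t with
  | 0 => 1%:M
  | t'.+1 => Sigma (sigma t') *m lprod Sigma sigma t'
  end.

Definition contracts (I : Type) (Sigma : I -> 'M[R]_n) (N : vec -> R)
  (sigma : nat -> I) : Prop :=
  exists t : nat,
    [set lprod Sigma sigma t *m x | x in unit_ball N] `<=` interior (unit_ball N).

Definition periodic_idx (I : Type) (sigma : nat -> I) (p : nat) : Prop :=
  (0 < p)%N /\ forall i, sigma (i + p)%N = sigma i.

Definition face (Q F : set vec) : Prop :=
  F = Q \/ F = set0 \/
  exists (b : vec) (c : R),
    (forall x, Q x -> dot b x <= c) /\
    F = Q `&` [set x | dot b x = c] /\ F !=set0.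

Definition proper_face (Q F : set vec) : Prop :=
  face Q F /\ F <> Q /\ F <> set0.

Definition double_face (Q D : set vec) : Prop :=
  exists F, proper_face Q F /\ D = F `|` [set - x | x in F].

Definition dface_lattice (Q D : set vec) : Prop :=
  double_face Q D \/ D = Q \/ D = set0.

Definition antichain (Q : set vec) (k : nat) (a : 'I_k -> set vec) : Prop :=
  (forall i, dface_lattice Q (a i)) /\
  (forall i j, i != j -> ~ (a i `<=` a j)).

Definition is_width (Q : set vec) (w : nat) : Prop :=
  (exists a : 'I_w -> set vec, antichain Q a) /\
  (forall (k : nat) (a : 'I_k -> set vec), antichain Q a -> (k <= w)%N).

End Defs.

From HB Require Import structures.
From mathcomp Require Import all_boot all_order all_algebra.
From mathcomp Require Import all_classical all_reals all_analysis.
From mathcomp Require Import lra zify.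
Import Order.TTheory GRing.Theory Num.Theory.
Import numFieldNormedType.Exports.
Local Open Scope classical_set_scope.
Local Open Scope ring_scope.
Set Implicit Arguments. Unset Strict Implicit. Unset Printing Implicit Defensive.

(* Write the unit ball as B = {x | b_i x <= c_i}.  A point of B is interior exactly when no
   constraint with c_i > 0 is tight at it, and a matrix mapping B into B maps the face of
   the constraints tight at y into the face of the constraints tight at the image of y.
   Call an active set J persistent when some product keeps a point with active set J on
   the boundary forever; a non-contracting product yields one, and each persistent J has a
   persistent successor J' and a matrix of Sigma sending the double face F_J u -F_J into
   F_J' u -F_J'.  Walking through persistent sets, always to a successor whose double face
   is maximal, a strictly larger double face is never followed by a smaller one, so
   within W(B) steps the walk lands in a double face contained in an earlier one.  The
   loop between them is a periodic product keeping a boundary point on the boundary. *)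

Section Dot.
Variables (R : realType) (n : nat).
Implicit Types (b x y : 'cV[R]_n).

Lemma dotDr b x y : dot b (x + y) = dot b x + dot b y.
Proof. by rewrite /dot -big_split; apply: eq_bigr => j _; rewrite mxE mulrDr. Qed.

Lemma dotZr b x a : dot b (a *: x) = a * dot b x.
Proof. by rewrite /dot mulr_sumr; apply: eq_bigr => j _; rewrite mxE mulrCA. Qed.

Lemma dotNr b x : dot b (- x) = - dot b x.
Proof. by rewrite -scaleN1r dotZr mulN1r. Qed.

Lemma dotBr b x y : dot b (x - y) = dot b x - dot b y.
Proof. by rewrite dotDr dotNr. Qed.

Lemma dot0r b : dot b 0 = 0.
Proof. by rewrite -(scale0r (0 : 'cV[R]_n)) dotZr mul0r. Qed.

Lemma dot_suml (I : finType) (J : {set I}) (b : I -> 'cV[R]_n) x :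
  dot (\sum_(i in J) b i) x = \sum_(i in J) dot (b i) x.
Proof.
rewrite /dot exchange_big /=; apply: eq_bigr => j _.
by rewrite summxE mulr_suml.
Qed.

Lemma dot_norm_le b x : `|dot b x| <= (\sum_j `|b j 0|) * `|x|.
Proof.
rewrite /dot mulr_suml; apply: le_trans (ler_norm_sum _ _ _) _.
apply: ler_sum => j _; rewrite normrM ler_wpM2l //.
have -> : `|x| = mx_norm x by [].
by rewrite mx_normrE; apply: le_trans (le_bigmax _ _ (j, 0)).
Qed.

End Dot.

Section Seminorm.
Variables (R : realType) (n : nat) (N : 'cV[R]_n -> R).
Hypothesis N_seminorm : seminorm N.

Lemma seminormN x : N (- x) = N x.
Proof. by rewrite -scaleN1r (proj2 N_seminorm) normrN normr1 mul1r. Qed.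

Lemma seminorm_ge0 x : 0 <= N x.
Proof.
have N0 : N 0 = 0 by rewrite -(scale0r (0 : 'cV[R]_n)) (proj2 N_seminorm) normr0 mul0r.
have := proj1 N_seminorm x (- x); rewrite subrr N0 seminormN; lra.
Qed.

Lemma unit_ballN x : unit_ball N x -> unit_ball N (- x).
Proof. by rewrite /unit_ball /= seminormN. Qed.

Lemma unit_ball_absorbing x : exists2 t : R, 0 < t & unit_ball N (t *: x).
Proof.
have N1_gt0 : 0 < N x + 1 by rewrite ltr_wpDl ?seminorm_ge0.
exists (N x + 1)^-1; first by rewrite invr_gt0.
rewrite /unit_ball /= (proj2 N_seminorm) gtr0_norm ?invr_gt0 //.
by rewrite mulrC ler_pdivrMr // mul1r lerDl.
Qed.

End Seminorm.

Lemma fin_pos_lower_bound (R : realFieldType) (T : finType) (P : pred T) (f : T -> R) :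
  (forall i, P i -> 0 < f i) -> exists2 e : R, 0 < e & forall i, P i -> e <= f i.
Proof.
move=> f_gt0; exists (\big[Num.min/1]_(i | P i) f i).
  by apply: (big_ind (fun v => 0 < v)) => // x y; rewrite lt_min => -> ->.
by move=> i Pi; rewrite (bigD1 i) //= ge_min lexx.
Qed.

Section Polyhedron.
Variables (R : realType) (n m : nat) (b : 'I_m -> 'cV[R]_n) (c : 'I_m -> R).
Implicit Types (x y z u : 'cV[R]_n) (M : 'M[R]_n) (J : {set 'I_m}).

Definition feasible x := forall i, dot (b i) x <= c i.

Definition active x : {set 'I_m} := [set i | dot (b i) x == c i].

(* For an absorbing [feasible], constraints with [c k = 0] hold everywhere; only those
   with [0 < c k] can witness the boundary. *)
Definition on_boundary x := exists k, dot (b k) x = c k /\ 0 < c k.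

Definition stable M := forall x, feasible x -> feasible (M *m x).

Lemma activeP x i : reflect (dot (b i) x = c i) (i \in active x).
Proof. by rewrite inE; apply: eqP. Qed.

Lemma on_boundary_sub x y : active x \subset active y -> on_boundary x -> on_boundary y.
Proof.
by move=> /fintype.subsetP xy [k [/activeP /xy /activeP hk ck]]; exists k.
Qed.

(* Moving from [y] away from [z] keeps the constraints active at [y] tight, and the
   slack of the other constraints absorbs a small enough step. *)
Lemma feasible_extend y z : feasible y -> feasible z -> active y \subset active z ->
  exists2 e : R, 0 < e & feasible (y + e *: (y - z)).
Proof.
move=> fy fz /fintype.subsetP yz.
pose gap i := (c i - dot (b i) y) / (`|dot (b i) y - dot (b i) z| + 1).
have [|e e0 e_le] := @fin_pos_lower_bound _ _ (fun i => dot (b i) y < c i) gap.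
  by move=> i hi; rewrite divr_gt0 ?subr_gt0 ?ltr_wpDl.
exists e => // i; rewrite dotDr dotZr dotBr.
have [hi|ci] := ltP (dot (b i) y) (c i); last first.
  have ey : dot (b i) y = c i by apply/eqP; rewrite eq_le fy.
  have /yz/activeP ez : i \in active y by apply/activeP.
  by rewrite ey ez subrr mulr0 addr0.
have := e_le i hi; rewrite ler_pdivlMr ?ltr_wpDl //.
have := ler_norm (dot (b i) y - dot (b i) z).
set d := dot (b i) y - dot (b i) z => d_le hle.
have : e * d <= e * (`|d| + 1) by rewrite ler_pM2l //; lra.
lra.
Qed.

(* The affine function [t |-> dot (b k) (M (y + t (y - z)))] is at most [c k] on [[-1, e]]
   and attains [c k] at the interior point [t = 0], hence it is constant. *)
Lemma stable_active M y z : stable M -> feasible y -> feasible z ->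
  active y \subset active z -> active (M *m y) \subset active (M *m z).
Proof.
move=> sM fy fz yz; have [e e0 fw] := feasible_extend fy fz yz.
apply/fintype.subsetP => k /activeP hk; apply/activeP.
have := sM _ fw k; rewrite mulmxDr -scalemxAr mulmxBr dotDr dotZr dotBr hk.
have := sM _ fz k; nra.
Qed.

Section SymmetricAbsorbing.
Hypothesis feasibleN : forall x, feasible x -> feasible (- x).
Hypothesis feasible_absorbing : forall x, exists2 t : R, 0 < t & feasible (t *: x).

Lemma feasible0 : feasible 0.
Proof. by have [t _] := feasible_absorbing 0; rewrite scaler0. Qed.

Lemma rhs_ge0 i : 0 <= c i.
Proof. by have := feasible0 i; rewrite dot0r. Qed.

Lemma rhs_le0_trivial i : c i <= 0 -> forall x, dot (b i) x <= c i.
Proof.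
move=> ci x; have ci0 : c i = 0 by apply/eqP; rewrite eq_le ci rhs_ge0.
have [t t0 ft] := feasible_absorbing x.
by have := ft i; rewrite dotZr ci0 pmulr_rle0.
Qed.

Lemma feasible_dilate u : feasible u -> ~ on_boundary u ->
  exists2 e : R, 0 < e & feasible ((1 + e) *: u).
Proof.
move=> fu nbu; have [|e e0 fe] := feasible_extend fu feasible0.
  apply/fintype.subsetP => i /activeP hi; apply/activeP; rewrite dot0r.
  apply/eqP; rewrite eq_le rhs_ge0 /= leNgt; apply/negP => ci.
  by apply: nbu; exists i.
by exists e => //; move: fe; rewrite subr0 scalerDl scale1r.
Qed.

Lemma on_boundary_dilate u l : on_boundary u -> 1 < l -> ~ feasible (l *: u).
Proof.
move=> [k [hk ck]] l1 fl; have := fl k; rewrite dotZr hk.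
have : c k < l * c k by rewrite -[X in X < _]mul1r ltr_pM2r.
lra.
Qed.

Lemma on_boundaryN u : feasible u -> on_boundary u -> on_boundary (- u).
Proof.
move=> fu bu; apply: contrapT => /(feasible_dilate (feasibleN fu)) [e e0].
move=> /feasibleN; rewrite scalerN opprK.
by apply: on_boundary_dilate bu _; rewrite ltrDl.
Qed.

Lemma stable_on_boundary M u : stable M -> feasible u ->
  on_boundary (M *m u) -> on_boundary u.
Proof.
move=> sM fu bMu; apply: contrapT => /(feasible_dilate fu) [e e0] /sM.
rewrite -scalemxAr; apply: on_boundary_dilate bMu _; by rewrite ltrDl.
Qed.

Lemma on_boundary_not_interior u : on_boundary u -> ~ interior (feasible : set _) u.
Proof.
move=> bu /nbhs_ballP [e e0 near_u].
have u1_gt0 : 0 < `|u| + 1 by rewrite ltr_wpDl.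
set d := e / (`|u| + 1).
have d0 : 0 < d by rewrite divr_gt0.
apply: (on_boundary_dilate bu (_ : 1 < 1 + d)); first by rewrite ltrDl.
apply: near_u; rewrite -ball_normE /= scalerDl scale1r opprD addrA subrr add0r normrN.
by rewrite normrZ gtr0_norm // /d mulrAC ltr_pdivrMr // ltr_pM2l // ltrDl.
Qed.

Lemma interior_feasible u : feasible u -> ~ on_boundary u -> interior (feasible : set _) u.
Proof.
move=> fu nbu; apply/nbhs_ballP.
pose K i := \sum_j `|b i j 0| + 1.
have K_gt0 i : 0 < K i by rewrite ltr_wpDl ?sumr_ge0.
have [|e e0 e_le] := @fin_pos_lower_bound _ _ (fun i => 0 < c i)
    (fun i => (c i - dot (b i) u) / K i).
  move=> i ci; rewrite divr_gt0 // subr_gt0 lt_def fu andbT.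
  by apply/eqP => hi; apply: nbu; exists i.
exists e => // v; rewrite -ball_normE /= distrC => uv i.
have [ci|ci] := ltP 0 (c i); last exact: rhs_le0_trivial ci v.
have := e_le i ci; rewrite ler_pdivlMr // => gap_u.
have := dot_norm_le (b i) (v - u); rewrite dotBr => dv.
have : (\sum_j `|b i j 0|) * `|v - u| <= e * K i.
  apply: le_trans (_ : K i * `|v - u| <= _); first by rewrite ler_wpM2r ?lerDl.
  by rewrite mulrC ler_wpM2r ?ltW.
have := ler_norm (dot (b i) v - dot (b i) u); lra.
Qed.

Definition face_of J x := feasible x /\ forall i, i \in J -> dot (b i) x = c i.

Definition dface J : set 'cV[R]_n := face_of J `|` [set - x | x in face_of J].

Lemma face_ofP J x : face_of J x <-> feasible x /\ J \subset active x.
Proof.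
split=> [[fx hx]|[fx /fintype.subsetP Jx]].
  by split=> //; apply/fintype.subsetP => i /hx /activeP.
by split=> // i /Jx /activeP.
Qed.

Lemma feasible_midpoint x y : feasible x -> feasible y -> feasible (2^-1 *: (x + y)).
Proof. by move=> fx fy i; rewrite dotZr dotDr; have := fx i; have := fy i; lra. Qed.

Lemma active_midpoint x y : feasible x -> feasible y ->
  active (2^-1 *: (x + y)) = active x :&: active y.
Proof.
move=> fx fy; apply/setP => i; rewrite !inE dotZr dotDr.
have := fx i; have := fy i => hy hx.
apply/eqP/andP => [h|[/eqP -> /eqP ->]]; last lra.
by split; apply/eqP; lra.
Qed.

Lemma face_ofE J : face_of J =
  (feasible : set _) `&` [set x | dot (\sum_(i in J) b i) x = \sum_(i in J) c i].
Proof.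
apply/seteqP; split => x [fx hx]; split => //=.
  by rewrite dot_suml; apply: eq_bigr.
move=> i iJ; have gap0 : \sum_(j in J) (c j - dot (b j) x) = 0.
  by rewrite sumrB -dot_suml hx subrr.
have /psumr_eq0P /(_ gap0 i iJ) : forall j, j \in J -> 0 <= c j - dot (b j) x.
  by move=> j _; rewrite subr_ge0.
by move=> /eqP; rewrite subr_eq0 => /eqP.
Qed.

Lemma proper_face_of J y : feasible y -> active y = J -> on_boundary y ->
  proper_face feasible (face_of J).
Proof.
move=> fy act_y [k [hk ck]].
have Fy : face_of J y by split=> // i; rewrite -act_y => /activeP.
split; last split.
- right; right; exists (\sum_(i in J) b i), (\sum_(i in J) c i); split.
    by move=> x fx; rewrite dot_suml; apply: ler_sum => i _.
  by split; [exact: face_ofE | exists y].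
- move=> FQ; have [_ F0] : face_of J 0 by rewrite FQ; exact: feasible0.
  have kJ : k \in J by rewrite -act_y; apply/activeP.
  by move: ck; rewrite -(F0 k kJ) dot0r ltxx.
- by move=> F0; have : set0 y by rewrite -F0.
Qed.

(* A point [x0] of the face with fewest active constraints is active only where the whole
   face is: otherwise the midpoint of [x0] and a point of the face would have fewer. *)
Lemma proper_faceP G : proper_face feasible G -> exists J, G = face_of J.
Proof.
move=> [[->|[->|[bb [cc [bb_le [-> [x1 Fx1]]]]]]] [G_neq_Q G_neq0]] //.
set F := _ `&` _ in Fx1 *.
have [k /asboolP [x0 [Fx0 k0]] k_min] := ex_minnP (ex_intro
  (fun k => `[< exists x, F x /\ #|active x| = k >]) _ (asboolT (ex_intro _ x1 (conj Fx1 erefl)))).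
have [fx0 bbx0] := Fx0.
have x0_min y : F y -> active x0 \subset active y.
  move=> [fy bby]; set z := 2^-1 *: (x0 + y).
  have Fz : F z by split; [exact: feasible_midpoint | rewrite /= dotZr dotDr bbx0 bby; lra].
  have := k_min _ (asboolT (ex_intro _ z (conj Fz erefl))).
  rewrite -k0 active_midpoint // => card_le.
  have /geq_leqif := subset_leqif_cards (subsetIl (active x0) (active y)).
  by rewrite card_le => /esym /eqP /finset.setIidPl.
exists (active x0); apply/seteqP; split => y.
  move=> Fy; split; first by case: Fy.
  by move=> i /(fintype.subsetP (x0_min y Fy)) /activeP.
move=> [fy act_y].
have [|e e0 fw] := feasible_extend fx0 fy.
  by apply/fintype.subsetP => i /act_y /activeP.
split=> //=; have := bb_le _ fw; rewrite dotDr dotZr dotBr bbx0.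
have := bb_le _ fy; nra.
Qed.

Definition dface_code (o : option (option {set 'I_m})) : set 'cV[R]_n :=
  if o is Some o' then (if o' is Some J then dface J else feasible) else set0.

Lemma dface_latticeP D : dface_lattice feasible D -> exists o, D = dface_code o.
Proof.
move=> [[F [/proper_faceP [J ->] ->]] | [-> | ->]].
- by exists (Some (Some J)).
- by exists (Some None).
- by exists None.
Qed.

Lemma antichain_card_le k (a : 'I_k -> set 'cV[R]_n) : antichain feasible a ->
  (k <= #|{: option (option {set 'I_m})}|)%N.
Proof.
move=> [a_lat a_anti]; have [f Hf] := choice (fun i => dface_latticeP (a_lat i)).
have f_inj : injective f.
  move=> i j fij; apply: contrapT => /eqP ij.
  by apply: (a_anti i j ij); rewrite (Hf i) (Hf j) fij.
by have := leq_card f f_inj; rewrite card_ord.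
Qed.

Lemma width_exists : exists w, is_width feasible w.
Proof.
pose P k := `[< exists a : 'I_k -> set 'cV[R]_n, antichain feasible a >].
have exP : exists k, P k.
  exists 0%N; apply/asboolP; exists (fun _ => set0).
  by split; [move=> i; right; right | case].
have [|w /asboolP [a a_anti] w_max] := @ex_maxnP P #|{: option (option {set 'I_m})}| exP.
  by move=> k /asboolP [a /antichain_card_le].
exists w; split; first by exists a.
by move=> k a' a'_anti; apply: w_max; apply/asboolP; exists a'.
Qed.

End SymmetricAbsorbing.

End Polyhedron.

Lemma exists_maximal (T : finType) (V : Type) (D : T -> set V) (P : T -> Prop) :
  (exists J, P J) -> exists2 J, P J & forall J', P J' -> D J `<=` D J' -> D J' `<=` D J.
Proof.
move=> [J0 PJ0].
pose below J := #|[pred J' | `[< D J' `<=` D J >]]|.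
have [J /asboolP PJ J_max] := @arg_maxnP _ J0 (fun J => `[< P J >]) below (asboolT PJ0).
exists J => // J' PJ' JJ'; apply: contrapT => J'J.
have : (below J < below J')%N.
  apply/proper_card/properP; split.
    by apply/fintype.subsetP => K; rewrite !inE => KJ x /KJ /JJ'.
  by exists J'; rewrite !inE; [|apply/asboolPn].
by have := J_max J' (asboolT PJ'); rewrite /geq /=; lia.
Qed.

Section PeriodicWalk.
Variables (T : finType) (V : Type) (D : T -> set V) (S : T -> Prop).
Variables (step : T -> T -> Prop) (w : nat).
Hypothesis step_le : forall J J1 J2, step J J1 -> D J1 `<=` D J2 -> step J J2.
Hypothesis S_step : forall J, S J -> exists2 J', S J' & step J J'.
Hypothesis S_nonempty : exists J, S J.
Hypothesis antichain_le : forall k (a : 'I_k -> T), (forall i, S (a i)) ->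
  (forall i j, i != j -> ~ D (a i) `<=` D (a j)) -> (k <= w)%N.

(* Walk by always stepping to a maximal successor: then [D (J i) <= D (J j)] with [i < j]
   forces the reverse inclusion, and as [J 0], ..., [J w] is not an antichain there are
   [a < b <= w] with [D (J b) <= D (J a)]; the loop from [a] to [b] closes up. *)
Lemma periodic_walk : exists (J : nat -> T) (p : nat),
  [/\ (0 < p <= w)%N, forall k, J (k + p)%N = J k,
      forall k, S (J k) & forall k, step (J k) (J k.+1)].
Proof.
pose max_step J J' := [/\ S J', step J J' &
  forall J'', S J'' -> step J J'' -> D J' `<=` D J'' -> D J'' `<=` D J'].
have [f f_max] : {f : T -> T & forall J, S J -> max_step J (f J)}.
  apply: (@choice _ _ (fun J J' => S J -> max_step J J')) => J.
  have [SJ|] := pselect (S J); last by exists J.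
  have [|J' [SJ' JJ'] J'_max] := exists_maximal D (P := fun J' => S J' /\ step J J').
    by have [J' SJ' JJ'] := S_step SJ; exists J'.
  by exists J' => _; split => // J'' *; apply: J'_max.
have [J0 SJ0 J0_max] := exists_maximal D S_nonempty.
pose path k := iter k f J0.
have path_S k : S (path k) by elim: k => //= k IH; case: (f_max _ IH).
have path_step k : step (path k) (path k.+1) by case: (f_max _ (path_S k)).
have path_max i j : (i < j)%N -> D (path i) `<=` D (path j) -> D (path j) `<=` D (path i).
  case: i => [_|i ij]; first exact: J0_max.
  have [_ _ /(_ (path j) (path_S j))] := f_max _ (path_S i).
  by move=> max_f le_ij; exact: (max_f (step_le (path_step i) le_ij) le_ij).
have [a [b [ab bw ba]]] : exists a b, [/\ (a < b)%N, (b <= w)%N & D (path b) `<=` D (path a)].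
  apply: contrapT => no_return.
  suff : (w.+1 <= w)%N by rewrite ltnn.
  apply: (antichain_le (a := fun i : 'I_w.+1 => path i)) => // i j ij le_ij.
  apply: no_return; case: (ltngtP i j) => [lt_ij|lt_ji|/val_inj eq_ij].
  - by exists i, j; split => //; [rewrite -ltnS | apply: path_max].
  - by exists j, i; split => //; rewrite -ltnS.
  - by rewrite eq_ij eqxx in ij.
pose p := (b - a)%N.
exists (fun k => path (a + k %% p)%N), p.
split=> [|k|k|k]; [lia | by rewrite modnDr | exact: path_S |].
rewrite modnS; case: ifP => [p_dvd|_]; last by rewrite addnS.
have p_gt0 : (0 < p)%N by rewrite subn_gt0.
have k_last : ((k %% p).+1 = p)%N.
  have : ((k %% p).+1 %% p = 0)%N by rewrite -addn1 modnDml addn1; apply/eqP.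
  have [lt_p|ge_p] := ltnP (k %% p)%N.+1 p; first by rewrite modn_small.
  by move=> _; apply/eqP; rewrite eqn_leq ge_p ltn_pmod.
have k_end : ((a + k %% p).+1 = b)%N by rewrite -addnS k_last subnKC // ltnW.
by rewrite addn0; apply: step_le (path_step _) _; rewrite k_end.
Qed.

End PeriodicWalk.

Lemma not_contractsP (R : realType) (n : nat) (I : Type) (Sigma : I -> 'M[R]_n)
    (N : 'cV[R]_n -> R) (sigma : nat -> I) :
  ~ contracts Sigma N sigma <->
  forall t, exists2 x, unit_ball N x & ~ interior (unit_ball N) (lprod Sigma sigma t *m x).
Proof.
split=> [nc t|esc [t sub]]; last first.
  by have [x Bx] := esc t; apply; apply: sub; exists x.
apply: contrapT => no_x; apply: nc; exists t => _ [x Bx <-].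
by apply: contrapT => nint; apply: no_x; exists x.
Qed.

Section Dynamics.
Variables (R : realType) (n m : nat) (b : 'I_m -> 'cV[R]_n) (c : 'I_m -> R).
Variables (I : Type) (Sigma : I -> 'M[R]_n).
Local Notation feasible := (feasible b c).
Local Notation active := (active b c).
Local Notation on_boundary := (on_boundary b c).
Local Notation face_of := (face_of b c).
Local Notation dface := (dface b c).
Hypothesis feasibleN : forall x, feasible x -> feasible (- x).
Hypothesis feasible_absorbing : forall x, exists2 t : R, 0 < t & feasible (t *: x).
Hypothesis Sigma_stable : forall i, stable b c (Sigma i).

Lemma lprod_stable sigma t : stable b c (lprod Sigma sigma t).
Proof.
elim: t => [x|t IH x fx] /=; first by rewrite mul1mx.
by rewrite -mulmxA; apply/Sigma_stable/IH.
Qed.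

Lemma lprodSr sigma t :
  lprod Sigma sigma t.+1 = lprod Sigma (fun k => sigma k.+1) t *m Sigma (sigma 0%N).
Proof.
elim: t => [|t IH]; first by rewrite /= mulmx1 mul1mx.
by rewrite -[LHS]/(Sigma (sigma t.+1) *m lprod Sigma sigma t.+1) IH mulmxA.
Qed.

Definition escapes (sigma : nat -> I) :=
  forall t, exists2 x, feasible x & ~ interior feasible (lprod Sigma sigma t *m x).

Definition persistent J := exists y, [/\ feasible y, active y = J &
  exists tau : nat -> I, forall t, on_boundary (lprod Sigma tau t *m y)].

Definition maps_dface i J J' := forall x, dface J x -> dface J' (Sigma i *m x).

Lemma persistent_dface J x : persistent J -> dface J x -> feasible x /\ on_boundary x.
Proof.
move=> [y [fy <- [tau tau_bd]]].
have bd_y : on_boundary y by have := tau_bd 0%N; rewrite mul1mx.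
have face_bd z : face_of (active y) z -> feasible z /\ on_boundary z.
  by move=> /face_ofP [fz yz]; split=> //; exact: (on_boundary_sub yz bd_y).
move=> [/face_bd //|[z /face_bd [fz bd_z] <-]].
by split; [exact: feasibleN | exact: (on_boundaryN feasibleN feasible_absorbing fz bd_z)].
Qed.

Lemma persistent_step J : persistent J -> exists2 J', persistent J' & exists i, maps_dface i J J'.
Proof.
move=> [y [fy <- [tau tau_bd]]]; set M := Sigma (tau 0%N).
exists (active (M *m y)).
  exists (M *m y); split=> //; first exact: Sigma_stable.
  by exists (fun k => tau k.+1) => t; rewrite mulmxA -lprodSr.
have face_M z : face_of (active y) z -> face_of (active (M *m y)) (M *m z).
  move=> /face_ofP [fz yz]; apply/face_ofP; split; first exact: Sigma_stable.
  exact: (stable_active (Sigma_stable _) fy fz yz).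
exists (tau 0%N) => x [/face_M|[z /face_M Fz <-]]; first by left.
by right; exists (M *m z); rewrite ?mulmxN.
Qed.

Section Escaping.
Variable sigma : nat -> I.
Hypothesis sigma_escapes : escapes sigma.

Definition hits_boundary t J := exists y,
  [/\ feasible y, active y = J & on_boundary (lprod Sigma sigma t *m y)].

Lemma hits_boundary_exists t : exists J, hits_boundary t J.
Proof.
have [x fx nint] := sigma_escapes t; exists (active x), x; split=> //.
apply: contrapT => nbd; apply: nint; apply: (interior_feasible feasible_absorbing _ nbd).
exact: lprod_stable.
Qed.

Lemma hits_boundary_le s t J : (s <= t)%N -> hits_boundary t J -> hits_boundary s J.
Proof.
move=> /subnK <-; elim: (t - s)%N => [|k IH] // [y [fy act_y]].
rewrite addSn /= -mulmxA => bd; apply: IH; exists y; split=> //.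
exact: (stable_on_boundary feasible_absorbing (Sigma_stable _) (lprod_stable _ _ fy) bd).
Qed.

(* [hits_boundary t J] is antitone in [t] and there are finitely many active sets [J]. *)
Lemma persistent_exists : exists J, persistent J.
Proof.
have [J J_hits] : exists J, forall t, hits_boundary t J.
  apply: contrapT => no_J.
  have [late late_miss] : {late : {set 'I_m} -> nat & forall J, ~ hits_boundary (late J) J}.
    apply: (@choice _ _ (fun J t => ~ hits_boundary t J)) => J.
    apply: contrapT => all_hit; apply: no_J; exists J => t.
    by apply: contrapT => miss; apply: all_hit; exists t.
  have [J hit] := hits_boundary_exists (\max_J late J).
  by apply: (late_miss J); exact: (hits_boundary_le (leq_bigmax J) hit).
have [y [fy act_y _]] := J_hits 0%N.
exists J, y; split=> //; exists sigma => t.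
have [z [fz act_z bd]] := J_hits t.
apply: (on_boundary_sub _ bd); apply: (stable_active (lprod_stable _ _) fz fy).
by rewrite act_y act_z.
Qed.

End Escaping.

Lemma persistent_antichain_le w : is_width feasible w ->
  forall k (a : 'I_k -> {set 'I_m}), (forall i, persistent (a i)) ->
  (forall i j, i != j -> ~ dface (a i) `<=` dface (a j)) -> (k <= w)%N.
Proof.
move=> [_ w_max] k a a_pers a_anti; apply: (w_max k (fun i => dface (a i))).
split=> // i; left; exists (face_of (a i)); split=> //.
have [y [fy act_y [tau tau_bd]]] := a_pers i.
apply: (proper_face_of feasible_absorbing fy act_y).
by have := tau_bd 0%N; rewrite mul1mx.
Qed.

Lemma escapes_periodic w : is_width feasible w -> (exists sigma, escapes sigma) ->
  exists (sigma : nat -> I) (p : nat),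
    [/\ (0 < p <= w)%N, forall k, sigma (k + p)%N = sigma k & escapes sigma].
Proof.
move=> width [sigma esc].
have step_le J J1 J2 : (exists i, maps_dface i J J1) -> dface J1 `<=` dface J2 ->
    exists i, maps_dface i J J2.
  by move=> [i J_J1] J1_J2; exists i => x /J_J1 /J1_J2.
have [J [p [/andP [p_gt0 p_le] J_per J_pers J_step]]] := periodic_walk step_le
  persistent_step (persistent_exists esc) (persistent_antichain_le width).
have J_mod k l : (k = l %[mod p])%N -> J k = J l.
  suff J_modp k' : J (k' %% p)%N = J k' by move=> kl; rewrite -J_modp kl J_modp.
  rewrite {2}(divn_eq k' p); elim: (k' %/ p)%N => [|q IH]; first by rewrite mul0n add0n.
  by rewrite mulSnr addnAC J_per.
have [g g_step] : {g : nat -> I & forall k, maps_dface (g k) (J k) (J k.+1)}.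
  exact: (@choice _ _ (fun k i => maps_dface i (J k) (J k.+1))).
exists (fun k => g (k %% p)%N), p; split=> [|k|t]; rewrite ?p_gt0 ?modnDr //.
have [y [fy act_y _]] := J_pers 0%N.
have y_orbit t' : dface (J t') (lprod Sigma (fun k => g (k %% p)%N) t' *m y).
  elim: t' => [|t' IH]; first by left; rewrite mul1mx; apply/face_ofP; rewrite act_y.
  rewrite /= -mulmxA (J_mod t'.+1 (t' %% p)%N.+1); last first.
    by rewrite -[(t' %% p)%N.+1]addn1 modnDml addn1.
  by apply: g_step; rewrite (J_mod _ t') ?modn_mod.
exists y => //; apply: on_boundary_not_interior.
exact: (proj2 (persistent_dface (J_pers t) (y_orbit t))).
Qed.

End Dynamics.

Theorem theorem1 (R : realType) (n : nat) (I : Type) (Sigma : I -> 'M[R]_n)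
  (N : 'cV[R]_n -> R) :
  seminorm N -> polyhedral N ->
  (forall i, nonincreasing_for N (Sigma i)) ->
  (exists sigma : nat -> I, ~ contracts Sigma N sigma) ->
  exists (sigma : nat -> I) (p : nat),
    ~ contracts Sigma N sigma /\ periodic_idx sigma p /\
    exists w : nat, is_width (unit_ball N) w /\ (p <= w)%N.
Proof.
move=> N_seminorm [m [b [c ball_eq]]] N_noninc [sigma sigma_nc].
have ballE : unit_ball N = feasible b c by rewrite ball_eq.
have feasibleN x : feasible b c x -> feasible b c (- x).
  by rewrite -ballE; exact: unit_ballN.
have absorbing x : exists2 t : R, 0 < t & feasible b c (t *: x).
  by rewrite -ballE; exact: unit_ball_absorbing.
have Sigma_stable i : stable b c (Sigma i).
  by move=> x; rewrite -ballE; apply: le_trans; apply: N_noninc.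
have [w width] := width_exists b c.
have [|sigma' [p [p_bounds sigma'_per sigma'_esc]]] :=
  escapes_periodic feasibleN absorbing Sigma_stable width.
  by exists sigma; move/not_contractsP: sigma_nc; rewrite ballE.
exists sigma', p; split; last split.
- by apply/not_contractsP; rewrite ballE.
- by case/andP: p_bounds.
- by exists w; rewrite ballE; case/andP: p_bounds.
Qed.
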